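(* Let $\Sigma$ be a finite alphabet. For every unranked ordered $\Sigma$-labeled tree $t$ with $|t|\ge 2$, $\frac12|\mathrm{bdag}(t)| \le |\mathrm{dag}(t)| \le \frac12 |\mathrm{bdag}(t)|^2$.
   Context: An unranked tree over $\Sigma$ is a finite rooted tree with nodes labeled in $\Sigma$ and linearly ordered children; $|t|$ is its number of edges. $\mathrm{dag}(t)$ is the minimal dag of $t$: its nodes are the distinct subtrees of $t$, the node of a subtree $f(s_1,\dots,s_k)$ having $k$ ordered edges to the nodes of $s_1,\dots,s_k$; $|\mathrm{dag}(t)|$ is its number of edges. The first-child/next-sibling encoding $\mathrm{fcns}(t)$ is the binary tree (optional left and right child at each node) on the nodes of $t$ in which the left child of $u$ is the first child of $u$ in $t$ and the right child of $u$ is the next sibling of $u$ in $t$ (when these exist). $\mathrm{bdag}(t)$ is the minimal dag of $\mathrm{fcns}(t)$ (identical subtrees merged), and $|\mathrm{bdag}(t)|$ its number of edges, not counting edges to absent children. *)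

From HB Require Import structures.
From mathcomp Require Import all_boot.
Set Implicit Arguments. Unset Strict Implicit. Unset Printing Implicit Defensive.

Section Trees.
Variable Sigma : finType.

Inductive tree := Node of Sigma & seq tree.

Definition label (t : tree) := let: Node a _ := t in a.
Definition children (t : tree) := let: Node _ ts := t in ts.

Fixpoint enc (t : tree) : GenTree.tree Sigma :=
  let: Node a ts := t in GenTree.Node 0 (GenTree.Leaf a :: map enc ts).

Fixpoint dec (g : GenTree.tree Sigma) : option tree :=
  match g with
  | GenTree.Node 0 (GenTree.Leaf a :: gs) => Some (Node a (pmap dec gs))
  | _ => None
  end.

Fixpoint encK (t : tree) : dec (enc t) = Some t :=
  match t return dec (enc t) = Some t with
  | Node a ts =>
    let fix aux (ts : seq tree) : pmap dec (map enc ts) = ts :=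
      match ts return pmap dec (map enc ts) = ts with
      | [::] => erefl
      | s :: ss => ltac:(rewrite /= encK /= aux; reflexivity)
      end in
    ltac:(rewrite /= aux; reflexivity)
  end.

HB.instance Definition _ := Countable.copy tree (pcan_type encK).

Inductive btree := BNode of Sigma & option btree & option btree.

Definition bleft (b : btree) := let: BNode _ l _ := b in l.
Definition bright (b : btree) := let: BNode _ _ r := b in r.

Fixpoint benc (b : btree) : GenTree.tree Sigma :=
  let: BNode a l r := b in
  GenTree.Node 0 [:: GenTree.Leaf a;
     (if l is Some x then GenTree.Node 2 [:: benc x] else GenTree.Node 1 [::]);
     (if r is Some x then GenTree.Node 2 [:: benc x] else GenTree.Node 1 [::])].

Fixpoint bdec (g : GenTree.tree Sigma) : option btree :=
  match g with
  | GenTree.Node 0 [:: GenTree.Leaf a; gl; gr] =>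
    let o g := match g with
               | GenTree.Node 2 [:: x] => Some (bdec x)
               | GenTree.Node 1 [::] => Some None
               | _ => None end in
    match o gl, o gr with
    | Some (Some l), Some (Some r) => Some (BNode a (Some l) (Some r))
    | Some (Some l), Some None => Some (BNode a (Some l) None)
    | Some None, Some (Some r) => Some (BNode a None (Some r))
    | Some None, Some None => Some (BNode a None None)
    | _, _ => None
    end
  | _ => None
  end.

Fixpoint bencK (b : btree) : bdec (benc b) = Some b :=
  match b return bdec (benc b) = Some b with
  | BNode a (Some l) (Some r) => ltac:(rewrite /= (bencK l) (bencK r); reflexivity)
  | BNode a (Some l) None => ltac:(rewrite /= (bencK l); reflexivity)
  | BNode a None (Some r) => ltac:(rewrite /= (bencK r); reflexivity)
  | BNode a None None => erefl
  end.

HB.instance Definition _ := Countable.copy btree (pcan_type bencK).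

Fixpoint edges (t : tree) : nat :=
  let: Node _ ts := t in sumn (map (fun s => (edges s).+1) ts).

Fixpoint subtrees (t : tree) : seq tree :=
  let: Node _ ts := t in t :: flatten (map subtrees ts).

(** |dag(t)|: the nodes of the minimal dag are the distinct subtrees of t;
    the node of f(s_1,...,s_k) has k outgoing edges. *)
Definition dag_size (t : tree) : nat :=
  sumn (map (fun s => size (children s)) (undup (subtrees t))).

(** First-child/next-sibling encoding. fcns_at t nxt is the binary node of
    the root of t, whose right child is nxt (the encoding of the next sibling
    of that node, if any) and whose left child encodes the first child of t;
    the children c_1,...,c_k are chained through right pointers. *)
Fixpoint fcns_at (t : tree) (nxt : option btree) : btree :=
  let: Node a cs := t in
  BNode a
    ((fix chain (cs : seq tree) : option btree :=
        match cs with
        | [::] => None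
        | c :: cs' => Some (fcns_at c (chain cs'))
        end) cs)
    nxt.

Definition fcns (t : tree) : btree := fcns_at t None.

Fixpoint bsubtrees (b : btree) : seq btree :=
  let: BNode _ l r := b in
  b :: (if l is Some x then bsubtrees x else [::])
    ++ (if r is Some x then bsubtrees x else [::]).

Definition bdeg (b : btree) : nat :=
  let: BNode _ l r := b in (isSome l) + (isSome r).

(** |bdag(t)|: edges of the minimal dag of fcns(t). *)
Definition bdag_size (t : tree) : nat :=
  sumn (map bdeg (undup (bsubtrees (fcns t)))).

End Trees.

From mathcomp Require Import all_boot zify.
Set Implicit Arguments. Unset Strict Implicit. Unset Printing Implicit Defensive.

(* The binary nodes of fcns(t) are the root and, for every distinct subtree
   s = f(c_1,...,c_k), the k nodes encoding the suffixes c_i,...,c_k of its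
   child list; each has at most two children, and the node of c_k has no right
   child, so |bdag(t)| <= 1 + 2|dag(t)| - #(inner subtrees) <= 2|dag(t)|.
   Conversely, let L and R be the numbers of left and right edges of bdag(t).
   Reading off the tree encoded by a node with a left child is injective onto
   the C inner subtrees, so C <= L; and a subtree with k children yields k - 1
   distinct nodes with a right child (their right chains have pairwise
   different lengths), so k <= R + 1. Hence |dag(t)| <= (R + 1) C, which is at
   most (L + R)^2 / 2 as soon as R > 0 or C > 1; when |t| >= 2 one of these
   holds, since a root with a single child c gives the two inner subtrees t, c. *)

Lemma leq_sumn_map_subset (T : eqType) (g : T -> nat) (u w : seq T) :
  uniq u -> {subset u <= w} -> sumn (map g u) <= sumn (map g w).
Proof.
move=> uu uw; rewrite !sumnE !big_map.
apply: (@sub_le_big_seq _ addn leq leqnn (fun m n => leq_addr n m)) => x.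
rewrite count_uniq_mem //; case: (boolP (x \in u)) => // /uw.
by rewrite -has_pred1 has_count.
Qed.

Lemma dag_bound_arith (C L R : nat) :
  0 < C <= L -> 0 < R \/ 1 < C -> 2 * (R.+1 * C) <= (L + R) ^ 2.
Proof. by move=> /andP[C_gt0 C_le_L] [R_gt0 | C_gt1]; nia. Qed.

Section FirstChildNextSibling.
Variable Sigma : finType.
Local Notation tree := (tree Sigma).
Local Notation btree := (btree Sigma).

Lemma tree_ind_mem (P : tree -> Prop) :
  (forall a cs, (forall c, c \in cs -> P c) -> P (Node a cs)) -> forall t, P t.
Proof.
move=> IHnode; fix IH 1 => -[a cs]; apply: IHnode.
elim: cs => [|c0 cs IHcs] c; first by rewrite in_nil => nil_c; discriminate nil_c.
by rewrite in_cons => /orP[/eqP-> | /IHcs].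
Qed.

Lemma mem_subtrees_self (t : tree) : t \in subtrees t.
Proof. by case: t => a cs; exact: mem_head. Qed.

Fixpoint fcns_chain (cs : seq tree) : option btree :=
  if cs is c :: cs' then Some (fcns_at c (fcns_chain cs')) else None.

Lemma fcns_at_Node a (cs : seq tree) g :
  fcns_at (Node a cs) g = BNode a (fcns_chain cs) g.
Proof. by []. Qed.

Lemma bright_fcns_at (c : tree) g : bright (fcns_at c g) = g.
Proof. by case: c. Qed.

Lemma isSome_fcns_chain (cs : seq tree) : isSome (fcns_chain cs) = (cs != [::]).
Proof. by case: cs. Qed.

Definition obsubtrees (o : option btree) := if o is Some b then bsubtrees b else [::].

Lemma bsubtrees_fcns_at a (cs : seq tree) g : bsubtrees (fcns_at (Node a cs) g) =
  fcns_at (Node a cs) g :: obsubtrees (fcns_chain cs) ++ obsubtrees g.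
Proof. by []. Qed.

Lemma mem_bsubtrees_fcns_at (c : tree) g : fcns_at c g \in bsubtrees (fcns_at c g).
Proof. by case: c => a cs; rewrite bsubtrees_fcns_at mem_head. Qed.

Fixpoint bforest (b : btree) : seq tree :=
  let: BNode a l r := b in
  Node a (if l is Some x then bforest x else [::])
    :: (if r is Some y then bforest y else [::]).

Definition obforest (o : option btree) := if o is Some b then bforest b else [::].

Definition unfcns (b : btree) : tree := let: BNode a l _ := b in Node a (obforest l).

Lemma bforest_fcns_at (s : tree) g : bforest (fcns_at s g) = s :: obforest g.
Proof.
elim/tree_ind_mem: s g => a cs IH g; rewrite fcns_at_Node /=; congr (Node _ _ :: _).
elim: cs IH => //= c cs IHcs IH.
rewrite IH ?mem_head //; congr (_ :: _); apply: IHcs => x xcs.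
exact/IH/mem_behead.
Qed.

Lemma obforest_fcns_chain (cs : seq tree) : obforest (fcns_chain cs) = cs.
Proof. by elim: cs => //= c cs IH; rewrite bforest_fcns_at IH. Qed.

Lemma unfcns_fcns_at (s : tree) g : unfcns (fcns_at s g) = s.
Proof. by case: s => a cs; rewrite fcns_at_Node /= obforest_fcns_chain. Qed.

Fixpoint chain_nodes (cs : seq tree) : seq btree :=
  if cs is c :: cs' then fcns_at c (fcns_chain cs') :: chain_nodes cs' else [::].

Lemma chain_nodes_sub (cs : seq tree) :
  {subset chain_nodes cs <= obsubtrees (fcns_chain cs)}.
Proof.
elim: cs => //= c cs IH b; rewrite in_cons => /orP[/eqP-> | /IH].
  exact: mem_bsubtrees_fcns_at.
by case: c => a l; rewrite bsubtrees_fcns_at in_cons mem_cat => ->; rewrite !orbT.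
Qed.

Lemma bdegE (b : btree) : bdeg b = isSome (bleft b) + isSome (bright b).
Proof. by case: b. Qed.

Lemma sumn_bdeg (bs : seq btree) : sumn (map (@bdeg _) bs) =
  count (fun b => isSome (bleft b)) bs + count (fun b => isSome (bright b)) bs.
Proof. by elim: bs => //= b bs ->; rewrite bdegE; lia. Qed.

Lemma sumn_bdeg_chain_nodes (cs : seq tree) :
  sumn (map (@bdeg _) (chain_nodes cs)) + (cs != [::]) <= 2 * size cs.
Proof.
elim: cs => //= c cs IH; rewrite bdegE bright_fcns_at isSome_fcns_chain.
have : isSome (bleft (fcns_at c (fcns_chain cs))) <= 1 by case: (isSome _).
by case: cs IH => [|c' cs'] /= IH; lia.
Qed.

Lemma sumn_bdeg_flatten_chain_nodes (ss : seq tree) :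
  sumn (map (@bdeg _) (flatten [seq chain_nodes (children s) | s <- ss]))
    + count (fun s => children s != [::]) ss
  <= 2 * sumn [seq size (children s) | s <- ss].
Proof.
elim: ss => //= s ss IH; rewrite map_cat sumn_cat.
by rewrite addnACA mulnDr leq_add ?sumn_bdeg_chain_nodes.
Qed.

Lemma chain_node_of_suffix (cs : seq tree) j : 2 <= j <= size cs -> exists b,
  [/\ b \in chain_nodes cs, isSome (bright b) & size (bforest b) = j].
Proof.
elim: cs => [|c cs IH] /=; first by lia.
move=> Hj; have [j_lt|j_gt|j_eq] := ltngtP j (size cs).+1; last 2 first.
- by lia.
- exists (fcns_at c (fcns_chain cs)); split; first exact: mem_head.
    rewrite bright_fcns_at isSome_fcns_chain -size_eq0 -lt0n -ltnS -j_eq.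
    by case/andP: Hj.
  by rewrite bforest_fcns_at /= obforest_fcns_chain j_eq.
have [|b [bcs bR bsize]] := IH; first by lia.
by exists b; split; rewrite // in_cons bcs orbT.
Qed.

Lemma fcns_chain_child (c : tree) cs : c \in cs -> exists g,
  {subset bsubtrees (fcns_at c g) <= obsubtrees (fcns_chain cs)}.
Proof.
elim: cs => // c0 cs IH; rewrite in_cons => /orP[/eqP-> | /IH[g Hg]].
  by exists (fcns_chain cs).
exists g => b /Hg /=; case: c0 => a l.
by rewrite bsubtrees_fcns_at in_cons mem_cat => ->; rewrite !orbT.
Qed.

Lemma fcns_at_subtree (t s : tree) g0 : s \in subtrees t -> exists g,
  {subset bsubtrees (fcns_at s g) <= bsubtrees (fcns_at t g0)}.
Proof.
elim/tree_ind_mem: t g0 => a cs IH g0; rewrite [subtrees _]/= in_cons => /orP[/eqP-> | ].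
  by exists g0.
move=> /flattenP[ss /mapP[c ccs ->] sc].
have [g' Hg'] := fcns_chain_child ccs; have [g Hg] := IH c ccs g' sc.
by exists g => b /Hg /Hg' Hb; rewrite bsubtrees_fcns_at in_cons mem_cat Hb orbT.
Qed.

Lemma fcns_chain_cover (s : tree) b :
  b \in obsubtrees (fcns_chain (children s)) ->
  exists2 s', s' \in subtrees s & b \in chain_nodes (children s').
Proof.
elim/tree_ind_mem: s b => a cs IH b /= Hb.
suff [bcs | [s' s'cs bs']] : b \in chain_nodes cs \/
    exists2 s', s' \in flatten (map (@subtrees _) cs) & b \in chain_nodes (children s').
- by exists (Node a cs); rewrite ?mem_head.
- by exists s'; rewrite // in_cons s'cs orbT.
elim: cs IH Hb => //= -[a' l] cs IHcs IH.
rewrite bsubtrees_fcns_at in_cons mem_cat => /orP[/eqP-> | /orP[Hb | Hb]].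
- by left; rewrite mem_head.
- have [s' s'l bs'] := IH (Node a' l) (mem_head _ _) b Hb.
  by right; exists s'; rewrite // mem_cat s'l.
- have IHcs' := IHcs (fun x xcs => IH x (mem_behead (s := _ :: cs) xcs)).
  have [bcs | [s' s'cs bs']] := IHcs' Hb.
    by left; rewrite in_cons bcs orbT.
  by right; exists s'; rewrite // mem_cat s'cs orbT.
Qed.

End FirstChildNextSibling.

Section Bounds.
Variables (Sigma : finType) (t : tree Sigma).

Let bnodes := undup (bsubtrees (fcns t)).
Let dnodes := undup (subtrees t).
Let lefts := count (fun b => isSome (bleft b)) bnodes.
Let rights := count (fun b => isSome (bright b)) bnodes.
Let inner := [seq s <- dnodes | children s != [::]].

Lemma bdag_size_lefts_rights : bdag_size t = lefts + rights.
Proof. exact: sumn_bdeg. Qed.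

Lemma size_children_le_rights s : s \in subtrees t -> size (children s) <= rights.+1.
Proof.
move=> st; have [g Hg] := fcns_at_subtree None st.
set k := size (children s).
suff : size (iota 2 k.-1) <=
       size [seq size (bforest b) | b <- bnodes & isSome (bright b)].
  by rewrite size_iota size_map size_filter -/rights; lia.
apply: uniq_leq_size => [|j]; first exact: iota_uniq.
rewrite mem_iota => Hj.
have [|b [bcs bR <-]] := @chain_node_of_suffix _ (children s) j; first by lia.
apply: map_f; rewrite mem_filter bR mem_undup; apply: Hg.
case: s bcs {st k Hj} => a cs /chain_nodes_sub bcs.
by rewrite bsubtrees_fcns_at in_cons mem_cat bcs orbT.
Qed.

Lemma size_inner_le_lefts : size inner <= lefts.
Proof.
rewrite /lefts -size_filter -(size_map (@unfcns _)).
apply: uniq_leq_size => [|s]; first by rewrite filter_uniq ?undup_uniq.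
rewrite mem_filter mem_undup => /andP[s_inner st].
have [g Hg] := fcns_at_subtree None st.
apply/mapP; exists (fcns_at s g); last by rewrite unfcns_fcns_at.
rewrite mem_filter mem_undup Hg ?mem_bsubtrees_fcns_at // andbT.
by case: s s_inner {st Hg} => a cs; rewrite /= isSome_fcns_chain.
Qed.

Lemma dag_size_le_inner : dag_size t <= rights.+1 * size inner.
Proof.
rewrite /dag_size /inner -/dnodes.
have : {in dnodes, forall s, size (children s) <= rights.+1}.
  by move=> s; rewrite mem_undup; apply: size_children_le_rights.
elim: dnodes => //= s l IH bounded.
have {}IH := IH (fun x xl => bounded x (mem_behead (s := s :: l) xl)).
case: (boolP (children s == [::])) => [/eqP-> // | _].
by rewrite mulnS leq_add ?bounded ?mem_head.
Qed.

Lemma bsubtrees_fcns_cover : {subset bsubtrees (fcns t) <=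
  fcns t :: flatten [seq chain_nodes (children s) | s <- dnodes]}.
Proof.
move=> b; rewrite /fcns; case Et: t => [a cs].
rewrite bsubtrees_fcns_at in_cons mem_cat in_nil orbF => /orP[/eqP-> | Hb].
  exact: mem_head.
have [s' s't bs'] := fcns_chain_cover (s := Node a cs) Hb.
apply/mem_behead/flattenP; exists (chain_nodes (children s')) => //.
by apply: map_f; rewrite mem_undup Et.
Qed.

Lemma inner_gt0 : children t != [::] -> 0 < size inner.
Proof.
move=> t_inner; rewrite size_filter -has_count; apply/hasP; exists t => //.
by rewrite mem_undup mem_subtrees_self.
Qed.

Lemma bdag_size_le_dag : children t != [::] -> bdag_size t <= 2 * dag_size t.
Proof.
move=> /inner_gt0; rewrite size_filter => inner_pos.
have root_deg : bdeg (fcns t) <= 1 by rewrite bdegE bright_fcns_at; case: (isSome _).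
have cover : bdag_size t <= sumn (map (@bdeg _)
    (fcns t :: flatten [seq chain_nodes (children s) | s <- dnodes])).
  apply: leq_sumn_map_subset; first exact: undup_uniq.
  by move=> b; rewrite mem_undup; apply: bsubtrees_fcns_cover.
apply: (leq_trans cover); rewrite /= /dag_size -/dnodes.
apply: leq_trans (sumn_bdeg_flatten_chain_nodes dnodes).
by rewrite addnC leq_add2l (leq_trans root_deg).
Qed.

Lemma rights_gt0_or_inner_gt1 : 2 <= edges t -> 0 < rights \/ 1 < size inner.
Proof.
have := size_children_le_rights (mem_subtrees_self t).
case Et: t => [a [|c [|c' cs]]] //= t_children t_edges; last by left; lia.
right; rewrite addn0 in t_edges.
have c_inner : children c != [::] by case: c Et t_edges => ? [].
have ct : c != t by apply/eqP => ct; move: (congr1 (@edges _) Et); rewrite -ct /=; lia.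
apply: (@uniq_leq_size _ [:: t; c]) => [|x]; first by rewrite /= inE eq_sym ct.
rewrite !inE mem_filter mem_undup => /orP[] /eqP->.
  by rewrite mem_subtrees_self Et.
by rewrite c_inner Et /= cats0 in_cons mem_subtrees_self orbT.
Qed.

Lemma dag_size_le_bdag : 2 <= edges t -> 2 * dag_size t <= bdag_size t ^ 2.
Proof.
move=> t_edges; have t_inner : children t != [::] by case: t t_edges => a [].
rewrite bdag_size_lefts_rights.
apply: leq_trans (dag_bound_arith _ (rights_gt0_or_inner_gt1 t_edges)).
  by rewrite leq_mul2l dag_size_le_inner.
by rewrite inner_gt0 ?size_inner_le_lefts.
Qed.

End Bounds.

Theorem corollary1 (Sigma : finType) (t : tree Sigma) :
  2 <= edges t ->
  bdag_size t <= 2 * dag_size t /\ 2 * dag_size t <= bdag_size t ^ 2.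
Proof.
move=> t_edges; split; last exact: dag_size_le_bdag.
by apply: bdag_size_le_dag; case: t t_edges => a [].
Qed.
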